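(* Let $R$ be a commutative multiplicative hyperring with scalar identity $1$, and let $\alpha$ be a good endomorphism of $R$. Then the set $\mathrm{Nil}_\alpha(R)$ of all $\alpha$-nilpotent elements of $R$ is a hyperideal of $R$.
   Context: A multiplicative hyperring is an abelian group $(R,+)$ with a hyperoperation $\circ:R\times R\to \mathcal P^*(R)$ (nonempty subsets) such that $a\circ(b\circ c)=(a\circ b)\circ c$, $a\circ(b+c)\subseteq a\circ b+a\circ c$, $(b+c)\circ a\subseteq b\circ a+c\circ a$, and $a\circ(-b)=(-a)\circ b=-(a\circ b)$. Products of subsets are unions of elementwise products, and $x^n=x\circ\cdots\circ x$ ($n$ factors). Commutative means $a\circ b=b\circ a$. A scalar identity $1$ satisfies $1\circ a=\{a\}$ for all $a$. A hyperideal is a nonempty $I\subseteq R$ closed under subtraction with $r\circ x\subseteq I$ for $r\in R$, $x\in I$. Standing assumption: all hyperideals are $\mathbf C$-hyperideals, i.e. for every finite product $A=r_1\circ\cdots\circ r_n$, $A\cap I\ne\emptyset$ implies $A\subseteq I$. A good endomorphism $\alpha$ satisfies $\alpha(x+y)=\alpha(x)+\alpha(y)$ and $\alpha(x\circ y)=\alpha(x)\circ\alpha(y)$; it is applied to sets elementwise. An element $x$ is $\alpha$-nilpotent if $0\in\alpha(x^n)$ for some integer $n>0$. *)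

(* the additive abelian group (R,+) is a zmodType;
   subsets of R are predicates R -> Prop; the hyperoperation is a
   relation  hm a b z  meaning  z \in a o b. *)
From HB Require Import structures.
From mathcomp Require Import all_boot all_order all_algebra.
Set Implicit Arguments. Unset Strict Implicit. Unset Printing Implicit Defensive.
Import GRing.Theory.
Local Open Scope ring_scope.

Section Hyper.
Variable R : zmodType.

Definition hset := R -> Prop.

Definition hset_eq (A B : hset) : Prop := forall z, A z <-> B z.
Definition hsubset (A B : hset) : Prop := forall z, A z -> B z.
Definition hsing (a : R) : hset := fun z => z = a.
Definition hsum (A B : hset) : hset := fun z => exists x y, A x /\ B y /\ z = x + y.
Definition hopp (A : hset) : hset := fun z => exists x, A x /\ z = - x.

Variable hm : R -> R -> hset.

Definition hprod (A B : hset) : hset := fun z => exists a b, A a /\ B b /\ hm a b z.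

Record is_mult_hyperring : Prop := {
  hm_nonempty : forall a b, exists z, hm a b z;
  hm_assoc : forall a b c, hset_eq (hprod (hsing a) (hm b c)) (hprod (hm a b) (hsing c));
  hm_distl : forall a b c, hsubset (hm a (b + c)) (hsum (hm a b) (hm a c));
  hm_distr : forall a b c, hsubset (hm (b + c) a) (hsum (hm b a) (hm c a));
  hm_oppr : forall a b, hset_eq (hm a (- b)) (hopp (hm a b));
  hm_oppl : forall a b, hset_eq (hm (- a) b) (hopp (hm a b))
}.

Definition hm_commutative : Prop := forall a b, hset_eq (hm a b) (hm b a).

Definition scalar_identity (one : R) : Prop := forall a, hset_eq (hm one a) (hsing a).

Definition hlistprod (r0 : R) (rs : seq R) : hset :=
  foldl (fun A r => hprod A (hsing r)) (hsing r0) rs.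

(* x^(n.+1) = x o ... o x with n.+1 factors *)
Fixpoint hpow (x : R) (n : nat) : hset :=
  match n with
  | 0%N => hsing x
  | n'.+1 => hprod (hpow x n') (hsing x)
  end.

Definition is_hyperideal (I : hset) : Prop :=
  (exists x, I x) /\
  (forall x y, I x -> I y -> I (x - y)) /\
  (forall r x, I x -> hsubset (hm r x) I).

Definition is_C_hyperideal (I : hset) : Prop :=
  forall r0 rs, (exists z, hlistprod r0 rs z /\ I z) -> hsubset (hlistprod r0 rs) I.

Definition good_endomorphism (alpha : R -> R) : Prop :=
  (forall x y, alpha (x + y) = alpha x + alpha y) /\
  (forall x y, hset_eq (fun z => exists w, hm x y w /\ z = alpha w) (hm (alpha x) (alpha y))).

Definition alpha_nilpotent (alpha : R -> R) (x : R) : Prop :=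
  exists n : nat, (0 < n)%N /\ exists w, hpow x n.-1 w /\ alpha w = 0.

Definition Nil_alpha (alpha : R -> R) : hset := fun x => alpha_nilpotent alpha x.

End Hyper.

From mathcomp Require Import all_boot all_order all_algebra zify.
Set Implicit Arguments. Unset Strict Implicit. Unset Printing Implicit Defensive.
Import GRing.Theory.
Local Open Scope ring_scope.

(* Since alpha maps [r o a] onto [alpha r o alpha a] and [b o 0 = {0}]
   (write [0 = 1 - 1] and distribute), the kernel of alpha is a hyperideal, hence
   a C-hyperideal: if one element of [x^n] is killed by alpha then all of [x^n] is,
   and then so are all higher powers.  Thus x is alpha-nilpotent iff some [x^n] lies
   in the kernel.  By commutativity and associativity, [(r o x)^n] lies in [R o x^n].
   By distributivity, every element of [(x - y)^(n+m-1)] is a finite sum of elements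
   each lying in [R o x^i] and in [R o y^(n+m-1-i)] for some i; in every term either
   [i >= n] or [n+m-1-i >= m], so every term, hence the sum, is killed by alpha. *)

Inductive finsum (R : zmodType) (G : hset R) : hset R :=
  | finsum0 : finsum G 0
  | finsumD c t : finsum G c -> G t -> finsum G (c + t).

Section FiniteSums.
Variables (R : zmodType) (G : hset R).

Lemma finsum1 t : G t -> finsum G t.
Proof. by move=> Gt; rewrite -[t]add0r; apply: finsumD (finsum0 G) Gt. Qed.

Lemma finsum_add a b : finsum G a -> finsum G b -> finsum G (a + b).
Proof.
move=> Ga; elim=> [|c t _ IHc Gt]; first by rewrite addr0.
by rewrite addrA; apply: finsumD IHc Gt.
Qed.

Lemma finsum_min (P : hset R) :
  P 0 -> (forall a b, P a -> P b -> P (a + b)) -> hsubset G P ->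
  hsubset (finsum G) P.
Proof. by move=> P0 PD GP z; elim=> // c t _ Pc /GP; apply: PD. Qed.

End FiniteSums.

Section Hyperring.
Variables (R : zmodType) (hm : R -> R -> hset R).
Hypothesis HR : is_mult_hyperring hm.

Lemma hm_assoc_l a b c v w :
  hm b c v -> hm a v w -> exists2 u, hm a b u & hm u c w.
Proof.
move=> bc_v av_w.
have [u [_ [ab_u [-> uc_w]]]] : hprod hm (hm a b) (hsing c) w.
  by apply/(hm_assoc HR); exists a, v.
by exists u.
Qed.

Lemma hm_assoc_r a b c u w :
  hm a b u -> hm u c w -> exists2 v, hm b c v & hm a v w.
Proof.
move=> ab_u uc_w.
have [_ [v [-> [bc_v av_w]]]] : hprod hm (hsing a) (hm b c) w.
  by apply/(hm_assoc HR); exists u, c.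
by exists v.
Qed.

Lemma hmNl a b u : hm a b u -> hm (- a) b (- u).
Proof. by move=> ab_u; apply/(hm_oppl HR); exists u. Qed.

Lemma hpow_hlistprod x n : hpow hm x n = hlistprod hm x (nseq n x).
Proof.
elim: n => // n IH; rewrite [hpow _ _ _]/= IH.
have -> : nseq n.+1 x = rcons (nseq n x) x by elim: n {IH} => //= n <-.
by rewrite /hlistprod foldl_rcons.
Qed.

Lemma hpow_inhabited x n : exists w, hpow hm x n w.
Proof.
elim: n => [|n [u xn_u]]; first by exists x.
by have [w uw] := hm_nonempty HR u x; exists w, u, x.
Qed.

Hypothesis Hcomm : hm_commutative hm.
Variable one : R.
Hypothesis Hone : scalar_identity hm one.

Lemma hm1l a : hm one a a.
Proof. exact/(Hone a). Qed.

Lemma hm1r_eq a z : hm a one z -> z = a.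
Proof. by move=> /(Hcomm a one z) /(Hone a). Qed.

Lemma hmr0 a w : hm a 0 w -> w = 0.
Proof.
rewrite -{1}(subrr one) => /(hm_distl HR) [p [q [/hm1r_eq -> [aNq ->]]]].
have [q' [/hm1r_eq -> ->]] := (hm_oppr HR a one q).1 aNq.
exact: subrr.
Qed.

Lemma hm0l a w : hm 0 a w -> w = 0.
Proof. by move=> /(Hcomm 0 a w) /hmr0. Qed.

(* [pow_multiple x i] is [R o x^i], where [i] counts the factors of x (unlike
   [hpow], whose index is one less) and [R o x^0 = R]. *)
Definition pow_multiple (x : R) (i : nat) : hset R := fun u =>
  if i is j.+1 then exists a b, hpow hm x j b /\ hm a b u else True.

Lemma pow_multiple1 x : pow_multiple x 1 x.
Proof. by exists one, x; split; last exact: hm1l. Qed.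

Lemma pow_multipleM x i u t w :
  pow_multiple x i u -> hm u t w -> pow_multiple x i w.
Proof.
case: i => //= i [a [b [xi_b /(Hcomm a b u) ba_u]]] uw.
have [v at_v /(Hcomm b v w) vb_w] := hm_assoc_r ba_u uw.
by exists v, b.
Qed.

Lemma pow_multipleS x i u w :
  pow_multiple x i u -> hm u x w -> pow_multiple x i.+1 w.
Proof.
case: i => [_ uw|i [a [b [xi_b ab_u]]] uw]; first by exists u, x.
have [v bx_v av_w] := hm_assoc_r ab_u uw.
by exists a, v; split=> //; exists b, x.
Qed.

Lemma pow_multipleN x i u : pow_multiple x i u -> pow_multiple x i (- u).
Proof. by case: i => //= i [a [b [xi_b /hmNl ab_u]]]; exists (- a), b. Qed.

Lemma hpow_hm_pow_multiple r x z k w :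
  hm r x z -> hpow hm z k w -> pow_multiple x k.+1 w.
Proof.
move=> rx_z; elim: k w => [w ->|k IH w [u [_ [/IH xk_u [-> uz_w]]]]].
  by exists r, x.
have [v ur_v vx_w] := hm_assoc_l rx_z uz_w.
exact: pow_multipleS (pow_multipleM xk_u ur_v) vx_w.
Qed.

Lemma finsum_hmr (G G' : hset R) s c w :
  (forall t u, G t -> hm t c u -> finsum G' u) ->
  finsum G s -> hm s c w -> finsum G' w.
Proof.
move=> GG' Gs; elim: Gs w => [w /hm0l ->|s' t _ IHs Gt w]; first exact: finsum0.
by case/(hm_distr HR) => [u [v [/IHs s'u [/GG' -/(_ Gt) tv ->]]]]; apply: finsum_add.
Qed.

Definition mixed_multiple (x y : R) (k : nat) : hset R := fun t =>
  exists2 i, (i <= k)%N & pow_multiple x i t /\ pow_multiple y (k - i) t.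

Lemma hpow_subr_finsum x y k w :
  hpow hm (x - y) k w -> finsum (mixed_multiple x y k.+1) w.
Proof.
elim: k w => [w ->|k IH w [u [_ [/IH xyk_u [-> u_xy_w]]]]].
  apply: finsum_add; apply: finsum1.
    by exists 1%N => //; split; first exact: pow_multiple1.
  by exists 0%N => //; split=> //; apply/pow_multipleN/pow_multiple1.
apply: finsum_hmr xyk_u u_xy_w => t v [i le_ik [xi_t yi_t]].
case/(hm_distl HR) => [v1 [_ [tx_v1 [/(hm_oppr HR) [v2 [ty_v2 ->]] ->]]]].
apply: finsum_add; apply: finsum1.
  exists i.+1 => //; split; first exact: pow_multipleS xi_t tx_v1.
  by rewrite subSS; apply: pow_multipleM yi_t tx_v1.
exists i; first exact: leqW.
split; first exact/pow_multipleN/(pow_multipleM xi_t ty_v2).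
by rewrite subSn //; apply/pow_multipleN/(pow_multipleS yi_t ty_v2).
Qed.

End Hyperring.

Section NilpotentElements.
Variables (R : zmodType) (hm : R -> R -> hset R).
Hypotheses (HR : is_mult_hyperring hm) (Hcomm : hm_commutative hm).
Variable one : R.
Hypothesis Hone : scalar_identity hm one.
Variable alpha : R -> R.
Hypothesis Halpha : good_endomorphism hm alpha.

Definition hker : hset R := fun z => alpha z = 0.

Lemma alphaD x y : alpha (x + y) = alpha x + alpha y.
Proof. exact: Halpha.1. Qed.

Lemma alpha0 : alpha 0 = 0.
Proof. by apply/(addrI (alpha 0)); rewrite -alphaD !addr0. Qed.

Lemma alphaB x y : alpha (x - y) = alpha x - alpha y.
Proof.
by apply/(addrI (alpha y)); rewrite -alphaD addrC subrK addrC subrK.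
Qed.

Lemma alpha_hm x y w : hm x y w -> hm (alpha x) (alpha y) (alpha w).
Proof. by move=> xy_w; apply/(Halpha.2 x y); exists w. Qed.

Lemma hker_hmr r a w : hker a -> hm r a w -> hker w.
Proof. by move=> ker_a /alpha_hm; rewrite ker_a => /(hmr0 HR Hcomm Hone). Qed.

Lemma hker_hyperideal : is_hyperideal hm hker.
Proof.
split; first by exists 0; apply: alpha0.
split; first by move=> x y ker_x ker_y; rewrite /hker alphaB ker_x ker_y subrr.
by move=> r x ker_x w; apply: hker_hmr.
Qed.

Definition pow_in_hker (x : R) (n : nat) : Prop := hsubset (hpow hm x n) hker.

Hypothesis HCker : is_C_hyperideal hm hker.

Lemma alpha_nilpotentP x :
  alpha_nilpotent hm alpha x <-> exists n, pow_in_hker x n.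
Proof.
split=> [[n [_ [w0 [xn_w0 ker_w0]]]]|[n xn_ker]].
  exists n.-1 => w; rewrite hpow_hlistprod => xn_w.
  apply: (HCker (ex_intro _ w0 (conj _ ker_w0))) xn_w.
  by rewrite -hpow_hlistprod.
have [w xn_w] := hpow_inhabited HR x n.
by exists n.+1; split=> //; exists w; split=> //; apply: xn_ker.
Qed.

Lemma pow_in_hkerW x n j : (n <= j)%N -> pow_in_hker x n -> pow_in_hker x j.
Proof.
move=> le_nj xn_ker; elim: j le_nj => [|j IH]; first by rewrite leqn0 => /eqP <-.
rewrite leq_eqVlt => /orP [/eqP <- //|/IH xj_ker w [b [_ [/xj_ker ker_b [-> bx_w]]]]].
exact: hker_hmr ker_b (proj1 (Hcomm b x w) bx_w).
Qed.

Lemma pow_multiple_hker x n i u :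
  pow_in_hker x n -> (n < i)%N -> pow_multiple hm x i u -> hker u.
Proof.
move=> xn_ker; case: i => // i; rewrite ltnS => le_ni [a [b [xi_b ab_u]]].
exact: hker_hmr (pow_in_hkerW le_ni xn_ker xi_b) ab_u.
Qed.

Lemma Nil_alpha0 : Nil_alpha hm alpha 0.
Proof. by apply/alpha_nilpotentP; exists 0%N => w ->; apply: alpha0. Qed.

Lemma Nil_alphaB x y :
  Nil_alpha hm alpha x -> Nil_alpha hm alpha y -> Nil_alpha hm alpha (x - y).
Proof.
move=> /alpha_nilpotentP [n xn_ker] /alpha_nilpotentP [m ym_ker].
apply/alpha_nilpotentP; exists (n + m)%N => w /(hpow_subr_finsum HR Hcomm Hone).
apply: finsum_min => [|a b|t [i le_i [xi_t yi_t]]]; first exact: alpha0.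
  by rewrite /hker alphaD => -> ->; rewrite addr0.
have [lt_ni|le_in] := ltnP n i; first exact: pow_multiple_hker xn_ker lt_ni xi_t.
by apply: pow_multiple_hker ym_ker _ yi_t; lia.
Qed.

Lemma Nil_alphaM r x z : Nil_alpha hm alpha x -> hm r x z -> Nil_alpha hm alpha z.
Proof.
move=> /alpha_nilpotentP [n xn_ker] rx_z; apply/alpha_nilpotentP.
exists n => w /(hpow_hm_pow_multiple HR Hcomm rx_z).
exact: pow_multiple_hker xn_ker (ltnSn n).
Qed.

Lemma Nil_alpha_hyperideal : is_hyperideal hm (Nil_alpha hm alpha).
Proof.
split; first by exists 0; apply: Nil_alpha0.
split; first exact: Nil_alphaB.
by move=> r x Nx z; apply: Nil_alphaM.
Qed.

End NilpotentElements.

Theorem mainTheorem10 (R : zmodType) (hm : R -> R -> R -> Prop)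
  (HR : is_mult_hyperring hm) (Hcomm : hm_commutative hm)
  (one : R) (Hone : scalar_identity hm one)
  (HC : forall I : hset R, is_hyperideal hm I -> is_C_hyperideal hm I)
  (alpha : R -> R) (Halpha : good_endomorphism hm alpha) :
  is_hyperideal hm (Nil_alpha hm alpha).
Proof.
have C_hker := HC _ (hker_hyperideal HR Hcomm Hone Halpha).
exact: (Nil_alpha_hyperideal HR Hcomm Hone Halpha C_hker).
Qed.
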